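(* For every $n\geq1$, \[ \lvert eNNC_{2n}\rvert=\sum_{j=0}^{n}(-1)^j\binom{n}{j}\lvert NNC_{2n-j}\rvert. \]
   Context: For $m\geq0$, a non-exhaustive non-crossing partition of $[m]=\{1,\dots,m\}$ is a collection $\mathcal{P}$ of pairwise disjoint nonempty subsets (blocks) of $[m]$, not necessarily covering $[m]$ (the empty collection is allowed), such that whenever $1\leq i<k<j<l\leq m$ with $i,j$ in a block $B$ and $k,l$ in a block $B'$, then $B=B'$. $NNC_m$ denotes the set of these. $eNNC_{2n}\subseteq NNC_{2n}$ is the set of those partitions of $[2n]$ that contain no block of the form $\{i\}$ with $i$ even. *)

From mathcomp Require Import all_boot all_order all_algebra.
Set Implicit Arguments. Unset Strict Implicit. Unset Printing Implicit Defensive.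

(* Convention: the ground set [m] = {1,...,m} is represented by 'I_m,
   the element i : 'I_m standing for the integer i+1.  The order is the
   same, so non-crossingness is unaffected; the integer i+1 is even iff
   the ordinal i is odd. *)

(* A collection of blocks: pairwise disjoint nonempty subsets, not
   necessarily covering [m], non-crossing. *)
Definition is_NNC (m : nat) (P : {set {set 'I_m}}) : bool :=
  [&& set0 \notin P,
      [forall B in P, forall B' in P, (B != B') ==> [disjoint B & B']] &
      [forall B in P, forall B' in P,
        [forall i : 'I_m, forall k : 'I_m, forall j : 'I_m, forall l : 'I_m,
          ([&& i < k, k < j, j < l, i \in B, j \in B, k \in B' & l \in B'])
            ==> (B == B')]]].

Definition NNC (m : nat) : {set {set {set 'I_m}}} := [set P | is_NNC P].

(* eNNC_{2n}: no singleton block {i} with i even (in 1-based numbering),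
   i.e. with the 0-based ordinal odd. *)
Definition eNNC (n : nat) : {set {set {set 'I_(n.*2)}}} :=
  [set P in NNC n.*2 | [forall i : 'I_(n.*2), odd i ==> ([set i] \notin P)]].

From mathcomp Require Import all_boot all_order all_algebra.
Import Order.TTheory GRing.Theory.

(* A partition lies in eNNC_{2n} iff, for each of the n positions i of the even
   elements of [2n], the singleton {i} is not a block.  By inclusion-exclusion
   over the set S of positions whose singleton is a block, it suffices to count
   the partitions in NNC_{2n} containing every {i}, i in S.  Deleting these
   blocks and relabelling the remaining 2n - |S| points increasingly is a
   bijection onto NNC_{2n-|S|}: an increasing relabelling preserves
   non-crossingness, and a singleton crosses nothing.  Grouping the sets S by
   size produces the binomial coefficients. *)

Set Implicit Arguments.
Unset Strict Implicit.
Unset Printing Implicit Defensive.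

Lemma is_NNCP m (P : {set {set 'I_m}}) :
  reflect [/\ set0 \notin P,
     {in P &, forall B B' : {set 'I_m}, B != B' -> [disjoint B & B']} &
     {in P &, forall (B B' : {set 'I_m}) (i k j l : 'I_m),
        i < k -> k < j -> j < l -> i \in B -> j \in B -> k \in B' -> l \in B' ->
        B = B'}] (is_NNC P).
Proof.
apply: (iffP and3P) => [[P0 /forall_inP disjP /forall_inP crossP]|[P0 disjP crossP]].
  split=> // [B B' BP B'P | B B' BP B'P i k j l ik kj jl iB jB kB' lB'].
    by move: (disjP B BP) => /forall_inP/(_ B' B'P)/implyP.
  move: (crossP B BP) => /forall_inP/(_ B' B'P).
  move=> /forallP/(_ i)/forallP/(_ k)/forallP/(_ j)/forallP/(_ l)/implyP.
  by rewrite ik kj jl iB jB kB' lB' => /(_ isT)/eqP.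
split=> //; apply/forall_inP => B BP; apply/forall_inP => B' B'P.
  by apply/implyP; apply: disjP.
apply/forallP => i; apply/forallP => k; apply/forallP => j; apply/forallP => l.
apply/implyP => /and5P[ik kj jl iB /and3P[jB kB' lB']].
by apply/eqP; apply: crossP ik kj jl iB jB kB' lB'.
Qed.

Lemma is_NNC_subset m (P Q : {set {set 'I_m}}) :
  Q \subset P -> is_NNC P -> is_NNC Q.
Proof.
move=> /subsetP QP /is_NNCP[P0 disjP crossP]; apply/is_NNCP; split.
- by apply: contra P0 => /QP.
- by move=> B B' /QP BP /QP B'P; apply: disjP.
- by move=> B B' /QP BP /QP B'P; apply: crossP.
Qed.

Section Relabel.

Variables (k m : nat) (f : 'I_k -> 'I_m).
Hypothesis f_mono : {mono f : i j / i <= j}.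

Lemma mono_ord_inj : injective f.
Proof. by move=> i j fij; apply/val_inj/eqP; rewrite eqn_leq -!f_mono fij leqnn. Qed.

Lemma mono_ord_ltE : {mono f : i j / i < j}.
Proof. by move=> i j; rewrite !ltnNge f_mono. Qed.

Definition relabel (Q : {set {set 'I_k}}) : {set {set 'I_m}} :=
  [set f @: C | C : {set 'I_k} in Q].

Lemma imset_mono_inj : injective (fun C : {set 'I_k} => f @: C).
Proof. exact/imset_inj/mono_ord_inj. Qed.

Lemma is_NNC_relabel Q : is_NNC (relabel Q) = is_NNC Q.
Proof.
have memQ (C : {set 'I_k}) : (f @: C \in relabel Q) = (C \in Q).
  by rewrite mem_imset //; exact: imset_mono_inj.
apply/is_NNCP/is_NNCP => -[Q0 disjQ crossQ]; split.
- by rewrite -memQ imset0.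
- move=> C C' CQ C'Q CC'; rewrite -(imset_disjoint mono_ord_inj).
  by apply: disjQ; rewrite ?memQ // (inj_eq imset_mono_inj).
- move=> C C' CQ C'Q i k' j l ik kj jl iC jC kC' lC'.
  apply: imset_mono_inj; apply: (crossQ _ _ _ _ (f i) (f k') (f j) (f l));
    by rewrite ?memQ ?mono_ord_ltE ?mem_imset //; exact: mono_ord_inj.
- by rewrite -(imset0 f) memQ.
- move=> _ _ /imsetP[C CQ ->] /imsetP[C' C'Q ->] CC'.
  by rewrite (imset_disjoint mono_ord_inj); apply: disjQ => //; apply: contraNneq CC' => ->.
- move=> _ _ /imsetP[C CQ ->] /imsetP[C' C'Q ->] x y z w xy yz zw.
  move=> /imsetP[i iC ex] /imsetP[j jC ez] /imsetP[k' kC' ey] /imsetP[l lC' ew].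
  move: xy yz zw; rewrite ex ey ez ew !mono_ord_ltE => ik kj jl.
  by rewrite (crossQ C C' CQ C'Q i k' j l).
Qed.

Lemma relabel_inj : injective relabel.
Proof. exact/imset_inj/imset_mono_inj. Qed.

End Relabel.

Section Singletons.

Variables (m : nat) (S : {set 'I_m}).

Definition singletons : {set {set 'I_m}} := [set [set i] | i in S].

Definition NNC_with_singletons : {set {set {set 'I_m}}} :=
  [set P in NNC m | [forall i in S, [set i] \in P]].

Lemma is_NNC_add_singletons (P : {set {set 'I_m}}) :
  {in P, forall B : {set 'I_m}, [disjoint B & S]} -> is_NNC P ->
  is_NNC (singletons :|: P).
Proof.
move=> PS /is_NNCP[P0 disjP crossP].
have sing B : B \in singletons -> exists2 i, i \in S & B = [set i] by move/imsetP.
have two_points B (x y : 'I_m) :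
    B \in singletons :|: P -> x < y -> x \in B -> y \in B -> B \in P.
  case/setUP => // /sing[i _ ->] xy /set1P ex /set1P ey.
  by move: xy; rewrite ex ey ltnn.
apply/is_NNCP; split.
- rewrite in_setU negb_or P0 andbT; apply/imsetP => -[i _ /setP/(_ i)].
  by rewrite !inE eqxx.
- move=> B B' /setUP[/sing[i iS ->]|BP] /setUP[/sing[j jS ->]|B'P] BB'.
  + by rewrite disjoints1 in_set1; apply: contraNneq BB' => ->.
  + by rewrite disjoints1 (disjointFl (PS _ B'P) iS).
  + by rewrite disjoint_sym disjoints1 (disjointFl (PS _ BP) jS).
  + exact: disjP.
- move=> B B' BP B'P i k j l ik kj jl iB jB kB' lB'.
  apply: (crossP B B' _ _ i k j l) => //.
    exact: (two_points B i j BP (ltn_trans ik kj)).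
  exact: (two_points B' k l B'P (ltn_trans kj jl)).
Qed.

Definition enum_compl : 'I_#|~: S| -> 'I_m := Order.enum_val.

Lemma enum_compl_mono : {mono enum_compl : i j / i <= j}.
Proof. exact: (Order.le_enum_val le_total). Qed.

Lemma enum_complP c : enum_compl c \notin S.
Proof. by have := Order.enum_valP c; rewrite inE. Qed.

Lemma enum_compl_preimK (B : {set 'I_m}) :
  B \subset ~: S -> enum_compl @: (enum_compl @^-1: B) = B.
Proof.
move=> /subsetP BS; apply/setP => x; apply/imsetP/idP => [[c]|xB].
  by rewrite inE => cB ->.
have xS := BS x xB; exists (Order.enum_rank_in xS x);
  by rewrite ?inE /enum_compl Order.enum_rankK_in.
Qed.

Definition add_singletons (Q : {set {set 'I_#|~: S|}}) : {set {set 'I_m}} :=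
  singletons :|: relabel enum_compl Q.

Lemma relabel_compl_disjoint Q :
  {in relabel enum_compl Q, forall B : {set 'I_m}, [disjoint B & S]}.
Proof.
move=> _ /imsetP[C _ ->]; rewrite disjoints_subset.
by apply/subsetP => _ /imsetP[c _ ->]; rewrite inE enum_complP.
Qed.

Lemma add_singletonsK Q :
  [set B in add_singletons Q | [disjoint B & S]] = relabel enum_compl Q.
Proof.
apply/setP => B; rewrite inE in_setU; case: (boolP (B \in relabel _ Q)) => [BQ|_].
  by rewrite orbT (relabel_compl_disjoint BQ).
rewrite orbF; case: (boolP (B \in singletons)) => //= /imsetP[i iS ->].
by rewrite disjoints1 iS.
Qed.

Lemma add_singletons_inj : injective add_singletons.
Proof.
move=> Q Q' /(congr1 (fun P : {set {set 'I_m}} => [set B in P | [disjoint B & S]])).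
by rewrite !add_singletonsK => /(relabel_inj enum_compl_mono).
Qed.

Lemma add_singletons_NNC Q :
  (add_singletons Q \in NNC_with_singletons) = (Q \in NNC #|~: S|).
Proof.
rewrite !inE; have -> : [forall i in S, [set i] \in add_singletons Q].
  by apply/forall_inP => i iS; rewrite in_setU imset_f.
rewrite andbT -(is_NNC_relabel enum_compl_mono); apply/idP/idP => NNC_Q.
  by apply: is_NNC_subset NNC_Q; apply: subsetUr.
exact: is_NNC_add_singletons (@relabel_compl_disjoint Q) NNC_Q.
Qed.

Lemma NNC_with_singletonsE P : P \in NNC_with_singletons ->
  P = add_singletons [set enum_compl @^-1: B | B : {set 'I_m} in P & [disjoint B & S]].
Proof.
rewrite inE => /andP[/[!inE]/is_NNCP[_ disjP _] /forall_inP PS].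
rewrite /add_singletons /relabel -imset_comp.
rewrite (eq_in_imset (g := id)) => [|B]; last first.
  by rewrite inE => /andP[_ BS]; rewrite /= enum_compl_preimK // -disjoints_subset.
rewrite imset_id; apply/setP => B; rewrite !inE; apply/idP/idP => [BP|].
  have [BS|/pred0Pn[i /andP[iB iS]]] := boolP [disjoint B & S].
    by rewrite BP orbT.
  suff -> : B = [set i] by rewrite imset_f.
  apply/eqP/negPn/negP => /(disjP _ _ BP (PS i iS)).
  by rewrite disjoint_sym disjoints1 => /negP/(_ iB).
by case/orP => [/imsetP[i iS ->]|/andP[]//]; apply: PS.
Qed.

Lemma card_NNC_with_singletons : #|NNC_with_singletons| = #|NNC #|~: S| |.
Proof.
have -> : NNC_with_singletons = add_singletons @: NNC #|~: S|.
  apply/setP => P; apply/idP/imsetP => [PS|[Q QN ->]]; last by rewrite add_singletons_NNC.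
  move: (PS); rewrite {1}(NNC_with_singletonsE PS) add_singletons_NNC => QN.
  by eexists; [exact: QN | exact: NNC_with_singletonsE].
exact: card_imset add_singletons_inj.
Qed.

End Singletons.

Local Open Scope ring_scope.

Lemma sum_subsets_card (V : nmodType) (T : finType) (E : {set T}) (F : nat -> V) :
  \sum_(S : {set T} | S \subset E) F #|S| = \sum_(j < #|E|.+1) F j *+ 'C(#|E|, j).
Proof.
rewrite (partition_big (fun S : {set T} => inord #|S| : 'I_#|E|.+1) xpredT) //=.
apply: eq_bigr => j _; rewrite -cards_draws -sumr_const big_mkcond /=.
rewrite [RHS]big_mkcond; apply: eq_bigr => S _; rewrite !inE.
case: (boolP (S \subset E)) => //= SE.
have lt_S : (#|S| < #|E|.+1)%N by rewrite ltnS subset_leq_card.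
by rewrite -val_eqE /= inordK //; case: eqP => // ->.
Qed.

Lemma sum_subsets_sign (R : pzRingType) (T : finType) (E : {set T}) :
  \sum_(S : {set T} | S \subset E) (-1) ^+ #|S| = (E == set0)%:R :> R.
Proof.
rewrite sum_subsets_card -cards_eq0 -expr0n -[X in X ^+ _](subrr (1 : R)).
rewrite (exprDn_comm _ (esym (commr1 _))).
by apply: eq_bigr => j _; rewrite expr1n mul1r.
Qed.

Lemma card_incl_excl (R : pzRingType) (U T : finType) (X : {set U}) (E : {set T})
    (A : T -> U -> bool) :
  #|[set x in X | [forall i in E, ~~ A i x]]|%:R =
  \sum_(S : {set T} | S \subset E)
     (-1) ^+ #|S| * #|[set x in X | [forall i in S, A i x]]|%:R :> R.
Proof.
have cardE (C : pred U) : #|[set x in X | C x]|%:R = \sum_(x in X) (C x)%:R :> R.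
  rewrite -sumr_const big_mkcond [RHS]big_mkcond; apply: eq_bigr => x _.
  by rewrite !inE; case: (x \in X); case: (C x).
under eq_bigr do rewrite cardE mulr_sumr.
rewrite cardE exchange_big; apply: eq_bigr => x _.
pose Ax := [set i | A i x].
have forallE (S : {set T}) : [forall i in S, A i x] = (S \subset Ax).
  by apply/forall_inP/subsetP => h i /h; rewrite inE.
transitivity (\sum_(S : {set T} | S \subset E :&: Ax) (-1) ^+ #|S| : R).
  rewrite sum_subsets_sign setI_eq0 disjoints_subset; congr (nat_of_bool _)%:R.
  by apply/forall_inP/subsetP => h i /h; rewrite !inE.
rewrite big_mkcond [RHS]big_mkcond; apply: eq_bigr => S _.
rewrite subsetI forallE.
by case: (S \subset E); case: (S \subset Ax); rewrite ?mulr1 ?mulr0.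
Qed.

Lemma card_odd_ord m : #|[set i : 'I_m | odd i]| = m./2.
Proof.
rewrite -sum1_card big_mkcond /=.
rewrite (eq_bigr (fun i : 'I_m => nat_of_bool (odd i))) => [|i _]; last first.
  by rewrite inE; case: odd.
rewrite -(big_mkord xpredT (fun i => nat_of_bool (odd i))).
elim: m => [|m IH]; first by rewrite big_geq.
by rewrite big_nat_recr //= IH uphalf_half addnC.
Qed.

Unset Implicit Arguments.

Theorem lemma4p11 (n : nat) (hn : (1 <= n)%N) :
  (#|eNNC n|%:Z : int) =
  \sum_(j < n.+1) ((-1) ^+ j * ('C(n, j))%:Z * (#|NNC (n.*2 - j)|)%:Z).
Proof.
(* The identity holds for n = 0 as well. *)
pose odds := [set i : 'I_n.*2 | odd i].
have eNNCE : eNNC n = [set P in NNC n.*2 | [forall i in odds, ~~ ([set i] \in P)]].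
  apply/setP => P; rewrite !inE; congr (_ && _).
  apply/forallP/forall_inP => oddP i; first by rewrite inE => /(implyP (oddP i)).
  by apply/implyP => oi; apply: oddP; rewrite inE.
rewrite -natz eNNCE.
rewrite (card_incl_excl _ _ _ (fun i (P : {set {set _}}) => [set i] \in P)).
under eq_bigr => S _ do rewrite -/(NNC_with_singletons S) card_NNC_with_singletons
                          (cardsCs (~: S)) setCK card_ord.
rewrite (sum_subsets_card odds (fun j => (-1) ^+ j * #|NNC (n.*2 - j)|%:R)).
rewrite card_odd_ord doubleK; apply: eq_bigr => j _.
by rewrite -mulrnAl -[(-1) ^+ j *+ _]mulr_natr !natz.
Qed.
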